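(* Let $0\le l\le\nu+\mu$ and suppose there exists $l_0\le l$ such that $|S_l^{l_0}(0)|=1$. Then $0\in T_l(M/K)$, i.e. there exists $l_1\le l$ with $|S_l^{l_1}(0)|=1$ and $S_l^a(0)=\varnothing$ for all $0\le a<l_1$.
   Context: Let $p$ be a prime and $K$ a field complete with respect to a discrete valuation whose residue field is perfect of characteristic $p$; fix a separable closure $K^{sep}$; $v_p$ is the $p$-adic valuation on $\mathbb{Z}$. $L/K$ is a finite totally ramified subextension of $K^{sep}/K$ of degree $n>1$ and $M/L$ a finite totally ramified subextension of $K^{sep}/L$ of degree $m>1$; $\nu=v_p(n)$, $\mu=v_p(m)$. For any such totally ramified extension $E/F$ of degree $N>1$ with $\eta=v_p(N)$, the indices of inseparability $i_0,\dots,i_\eta$ are defined by: choose uniformizers $\pi_F,\pi_E$, let $\hat{\mathcal{F}}(X)=\sum_{h\ge0}a_hX^{h+N}$ be the unique series with coefficients in the Teichmüller representatives of the residue field such that $\hat{\mathcal{F}}(\pi_E)=\pi_F$, put $\tilde{\imath}_j=\min\{h\ge0:v_p(h+N)\le j,\ a_h\ne0\}$ (or $\infty$), $i_\eta=0$ and $i_j=\min\{\tilde{\imath}_j,i_{j+1}+v_E(p)\}$ for $j=\eta-1,\dots,0$ ($v_E$ normalized with $v_E(E^\times)=\mathbb{Z}$, $v_E(p)=\infty$ in characteristic $p$). Set $\tilde{\phi}_{E/F}^j(x)=i_j+p^jx$ and $\phi_{E/F}^j(x)=\min\{\tilde{\phi}_{E/F}^{j_0}(x):0\le j_0\le j\}$.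 Let $i_j$ be the indices of $L/K$; define $\tilde{\phi}_{L/K}^{j,m}(x)=mi_j+p^jx$ and $\phi_{L/K}^{j,m}(x)=m\phi_{L/K}^j(x/m)$. For $0\le l\le\nu+\mu$ let $\Omega_l=\{(j,k):0\le j\le\nu,\ 0\le k\le\mu,\ j+k=l\}$, $\lambda_{M/K}^l(x)=\min\{\phi_{L/K}^{j,m}(\phi_{M/L}^k(x)):(j,k)\in\Omega_l\}$, and for $0\le a\le l$, $S_l^a(x)=\{(j,k)\in\Omega_a:\tilde{\phi}_{L/K}^{j,m}(\tilde{\phi}_{M/L}^k(x))=\lambda_{M/K}^l(x)\}$. Finally $T_l(M/K)=\{t\ge0:\exists\,l_1\le l\text{ with }|S_l^{l_1}(t)|=1\text{ and }|S_l^a(t)|=0\text{ for }0\le a<l_1\}$. *)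

From HB Require Import structures.
From mathcomp Require Import all_boot all_order all_algebra.
From Stdlib Require Import ClassicalDescription.
Set Implicit Arguments. Unset Strict Implicit. Unset Printing Implicit Defensive.
Import Order.TTheory GRing.Theory Num.Theory.

(* Extended naturals N u {oo}: [None] stands for +oo. *)
Definition ominn (x y : option nat) : option nat :=
  match x, y with
  | None, _ => y | _, None => x
  | Some a, Some b => Some (minn a b) end.
Definition oaddn (x y : option nat) : option nat :=
  match x, y with Some a, Some b => Some (a + b) | _, _ => None end.

(* ---- Indices of inseparability of a totally ramified E/F of degree N ----
   The series F^(X) = sum_h a_h X^(h+N) only enters through its support:
   [a h] = true  iff  a_h <> 0.   [vEp] = v_E(p)  (None = oo, char p). *)

Definition tilde_idx (p N : nat) (a : nat -> bool) (j : nat) : option nat :=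
  match excluded_middle_informative
          (exists h, (fun h => a h && (logn p (h + N) <= j)%N) h) with
  | left H => Some (@ex_minn (fun h => a h && (logn p (h + N) <= j)%N) H)
  | right _ => None
  end.

(* i_eta = 0, i_j = min(tilde i_j, i_(j+1) + v_E(p)); computed by
   backward recursion on d = eta - j *)
Fixpoint idx_rec (p N : nat) (a : nat -> bool) (vEp : option nat) (d : nat)
  : option nat :=
  match d with
  | 0 => Some 0
  | d'.+1 => ominn (tilde_idx p N a (logn p N - d'.+1))
                   (oaddn (idx_rec p N a vEp d') vEp)
  end.

Definition ins_idx (p N : nat) (a : nat -> bool) (vEp : option nat) (j : nat)
  : option nat := idx_rec p N a vEp (logn p N - j).

(* ---- the functions phi, over Q u {+oo} (None = +oo) ---- *)
Local Open Scope ring_scope.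

Definition omin (x y : option rat) : option rat :=
  match x, y with
  | None, _ => y | _, None => x
  | Some a, Some b => Some (Num.min a b) end.

Definition tphi (i : nat -> option nat) (p j : nat) (x : option rat)
  : option rat :=
  match i j, x with
  | Some ij, Some x => Some (ij%:R + (p ^ j)%:R * x)
  | _, _ => None end.

Definition phi (i : nat -> option nat) (p j : nat) (x : option rat)
  : option rat :=
  \big[omin/None]_(j0 < j.+1) tphi i p j0 x.

Definition tphim (i : nat -> option nat) (p m j : nat) (x : option rat)
  : option rat :=
  match i j, x with
  | Some ij, Some x => Some ((m * ij)%:R + (p ^ j)%:R * x)
  | _, _ => None end.

Definition phim (i : nat -> option nat) (p m j : nat) (x : option rat)
  : option rat :=
  omap (fun z => m%:R * z) (phi i p j (omap (fun z => z / m%:R) x)).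

(* ---- the tower M/L/K ----
   p : residue characteristic; n = [L:K], m = [M:L];
   eK = v_K(p) (None = oo in characteristic p), so v_L(p) = n eK and
   v_M(p) = m n eK;  aL, aM : supports of the series for L/K and M/L. *)
Definition vLp (n : nat) (eK : option nat) := omap (muln n) eK.
Definition vMp (n m : nat) (eK : option nat) := omap (muln (m * n)) eK.

Definition idxLK p n eK aL := ins_idx p n aL (vLp n eK).
Definition idxML p n m eK aM := ins_idx p m aM (vMp n m eK).

Definition lam p n m eK aL aM (l : nat) (x : rat) : option rat :=
  \big[omin/None]_(j < (logn p n).+1 | (j <= l)%N && (l - j <= logn p m)%N)
     phim (idxLK p n eK aL) p m j
          (phi (idxML p n m eK aM) p (l - j) (Some x)).

Definition Sla p n m eK aL aM (l a : nat) (x : rat)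
  : {set 'I_(logn p n).+1 * 'I_(logn p m).+1} :=
  [set jk : 'I_(logn p n).+1 * 'I_(logn p m).+1 | ((jk.1 : nat) + jk.2 == a)%N &&
            (tphim (idxLK p n eK aL) p m jk.1
                   (tphi (idxML p n m eK aM) p jk.2 (Some x))
             == lam p n m eK aL aM l x)].

Definition in_T p n m eK aL aM (l : nat) (t : rat) : Prop :=
  0 <= t /\
  exists l1, (l1 <= l)%N /\ #|Sla p n m eK aL aM l l1 t| = 1%N /\
     forall a, (a < l1)%N -> Sla p n m eK aL aM l a t = set0.

From HB Require Import structures.
From mathcomp Require Import all_boot all_order all_algebra.
From Stdlib Require Import ClassicalDescription.
From mathcomp Require Import zify ring.
Import Order.TTheory GRing.Theory Num.Theory.
Set Implicit Arguments. Unset Strict Implicit.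

(* At x = 0 the pair (j, k) takes the value m i_j + p^j i'_k, which does not
   increase when j or k does.  Hence if (j, k) attains lambda^l(0) and
   j + k < l, so does its successor (j, k + 1), or (j + 1, mu) when k = mu.
   This successor map S_a -> S_(a+1) is injective, because i'_(mu-1) > 0
   forbids (j, mu - 1) to attain the minimum when (j, mu) is admissible.  So
   |S_l^a(0)| is nondecreasing in a <= l, and the first nonempty S_l^a(0) has
   at most |S_l^(l_0)(0)| = 1 element. *)

Lemma first_positive_eq1 (c : nat -> nat) (l l0 : nat) :
  (forall a, a < l -> c a <= c a.+1) -> l0 <= l -> c l0 = 1 ->
  exists l1, [/\ l1 <= l0, c l1 = 1 & forall a, a < l1 -> c a = 0].
Proof.
move=> c_step l0_le c_l0.
have c_mono a b : a <= b <= l -> c a <= c b.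
  elim: b => [|b IHb] /andP [ab bl]; first by rewrite (_ : a = 0) //; lia.
  case: (leqP a b) => [ab'|]; last by move=> ba; rewrite (_ : a = b.+1) //; lia.
  by apply: leq_trans (IHb _) (c_step b bl); rewrite ab' ltnW.
have c_pos : exists a, 0 < c a by exists l0; rewrite c_l0.
case: (ex_minnP c_pos) => l1 c_l1 l1_min.
have l1_le : l1 <= l0 by apply: l1_min; rewrite c_l0.
exists l1; split => //.
  by apply/eqP; rewrite eqn_leq c_l1 -c_l0 c_mono // l1_le.
move=> a a_lt; apply/eqP; rewrite -leqn0 leqNgt.
by apply: contraTN a_lt => /l1_min; rewrite -leqNgt.
Qed.

Definition onle (x y : option nat) : bool :=
  match x, y with
  | _, None => true
  | Some a, Some b => a <= b
  | None, Some _ => false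
  end.

Lemma onle_trans y x z : onle x y -> onle y z -> onle x z.
Proof. by case: x; case: y; case: z => //= a b c; apply: leq_trans. Qed.

Lemma onle_minn x y z : onle x y -> onle x z -> onle x (ominn y z).
Proof. by case: x; case: y; case: z => //= a b c xy xz; rewrite leq_min xy xz. Qed.

Lemma ominn_onlel x y : onle (ominn x y) x.
Proof. by case: x; case: y => //= a b; rewrite geq_minl. Qed.

Lemma onle_oaddn x v : onle x (oaddn x v).
Proof. by case: x; case: v => //= a b; rewrite leq_addr. Qed.

Section InseparabilityIndices.
Variables (p N : nat) (a : nat -> bool) (v : option nat).
Local Notation eta := (logn p N).
Local Notation tidx := (tilde_idx p N a).
Local Notation idx := (ins_idx p N a v).

Lemma ins_idx_ge j : eta <= j -> idx j = Some 0.
Proof. by move=> eta_le; rewrite /ins_idx (_ : eta - j = 0) //; lia. Qed.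

Lemma ins_idxE j : j < eta -> idx j = ominn (tidx j) (oaddn (idx j.+1) v).
Proof.
move=> j_lt; rewrite /ins_idx (_ : eta - j = (eta - j.+1).+1) /=; last lia.
by rewrite (_ : eta - (eta - j.+1).+1 = j) //; lia.
Qed.

Lemma tilde_idx_onle_succ j : onle (tidx j.+1) (tidx j).
Proof.
rewrite /tilde_idx.
case: excluded_middle_informative => [ex1|nex1];
  case: excluded_middle_informative => [ex0|nex0] //=.
- case: (ex_minnP ex1) => h _ h_min; case: (ex_minnP ex0) => h0 /andP [ah0 lh0] _.
  by apply: h_min; rewrite ah0 leqW.
- case: (ex_minnP ex0) => h /andP [ah lh] _; case: nex1; exists h.
  by rewrite ah leqW.
Qed.

Lemma ins_idx_onle_succ j : onle (idx j.+1) (idx j).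
Proof.
case: (ltnP j eta) => j_lt; last by rewrite !ins_idx_ge // leqW.
rewrite (ins_idxE j_lt); apply: onle_minn; last exact: onle_oaddn.
case: (ltnP j.+1 eta) => [Sj_lt|Sj_ge]; last by rewrite ins_idx_ge //; case: (tidx _).
by rewrite (ins_idxE Sj_lt); apply: onle_trans (ominn_onlel _ _) (tilde_idx_onle_succ j).
Qed.

(* In characteristic p ([v = None]) the hypothesis rules out a series F^ in
   X^p, for which i_0 = oo. *)
Lemma ins_idx_finite :
  v <> None \/ (exists h, a h && (logn p (h + N) == 0)) ->
  forall j, exists d, idx j = Some d.
Proof.
move=> fin j; rewrite /ins_idx; elim: (eta - j) => [|d [x IHd]] /=; first by exists 0.
rewrite IHd; have [v_fin | [h /andP [ah /eqP lh]]] := fin.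
  by case: v v_fin => // e _; case: (tidx _) => [t|]; eexists.
rewrite /tilde_idx; case: excluded_middle_informative => [ex|nex].
  by case: oaddn; eexists.
by case: nex; exists h; rewrite ah lh.
Qed.

Lemma ins_idx_pred_eta_neq0 : v <> Some 0 -> 0 < eta -> idx eta.-1 <> Some 0.
Proof.
move=> v_neq0 eta_gt0.
rewrite ins_idxE ?prednK // ins_idx_ge //.
have -> : oaddn (Some 0) v = v by case: v v_neq0.
have tidx_neq0 : tidx eta.-1 <> Some 0.
  rewrite /tilde_idx; case: excluded_middle_informative => // ex.
  case: ex_minnP => h /andP [_ lh] _ [h0]; move: lh; rewrite h0 add0n; lia.
case: (tidx _) tidx_neq0 => [t|]; case: v v_neq0 => [e|] //= v_neq0 t_neq0 [].
by rewrite /minn; case: ltnP => _ ?; subst.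
Qed.

End InseparabilityIndices.

Local Open Scope ring_scope.

Definition ole (x y : option rat) : bool :=
  match x, y with
  | _, None => true
  | Some a, Some b => a <= b
  | None, Some _ => false
  end.

Lemma ole_trans y x z : ole x y -> ole y z -> ole x z.
Proof. by case: x; case: y; case: z => //= a b c; apply: le_trans. Qed.

Lemma ole_anti x y : ole x y -> ole y x -> x = y.
Proof. by case: x; case: y => //= a b xy yx; congr Some; apply/eqP; rewrite eq_le xy yx. Qed.

Lemma omin_olel x y : ole (omin x y) x.
Proof. by case: x; case: y => //= a b; rewrite ge_min lexx. Qed.

Lemma omin_oler x y : ole (omin x y) y.
Proof. by case: x; case: y => //= a b; rewrite ge_min lexx orbT. Qed.

Lemma big_omin_ole (I : eqType) (r : seq I) (P : pred I) (F : I -> option rat) i0 :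
  i0 \in r -> P i0 -> ole (\big[omin/None]_(i <- r | P i) F i) (F i0).
Proof.
elim: r => //= x r IHr; rewrite inE big_cons => /orP [/eqP <- -> | i0r Pi0].
  exact: omin_olel.
by case: (P x); [apply: ole_trans (omin_oler _ _) (IHr i0r Pi0) | apply: IHr].
Qed.

Lemma phi_ole_tphi i p J j x : (j <= J)%N -> ole (phi i p J x) (tphi i p j x).
Proof.
move=> jJ; rewrite /phi (_ : j = Ordinal (jJ : (j < J.+1)%N)) //.
by apply: big_omin_ole; rewrite ?mem_index_enum.
Qed.

Lemma phim_phi_ole iL iM p m J K j k x : (0 < m)%N -> (j <= J)%N -> (k <= K)%N ->
  ole (phim iL p m J (phi iM p K (Some x))) (tphim iL p m j (tphi iM p k (Some x))).
Proof.
move=> m_gt0 jJ kK; rewrite /tphim /tphi.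
case iLj: (iL j) => [d|]; last by case: phim.
case iMk: (iM k) => [c|]; last by case: phim.
have := phi_ole_tphi iM p (Some x) kK; rewrite /tphi iMk.
case: (phi iM p K (Some x)) => [y|] //= y_le; rewrite /phim /=.
have := phi_ole_tphi iL p (Some (y / m%:R)) jJ; rewrite /tphi iLj.
case: (phi iL p J _) => [z|] //= z_le.
have m_neq0 : (m%:R : rat) != 0 by rewrite pnatr_eq0 -lt0n.
apply: le_trans (_ : m%:R * (d%:R + (p ^ j)%:R * (y / m%:R)) <= _).
  by rewrite ler_wpM2l ?ler0n.
have -> : m%:R * (d%:R + (p ^ j)%:R * (y / m%:R)) = (m * d)%:R + (p ^ j)%:R * y.
  by rewrite natrM; field.
by rewrite lerD2l ler_wpM2l ?ler0n.
Qed.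

Lemma lam_ole p n m eK aL aM l x j k : (0 < m)%N ->
  (j <= logn p n)%N -> (k <= logn p m)%N -> (j + k <= l)%N ->
  (l <= logn p n + logn p m)%N ->
  ole (lam p n m eK aL aM l x)
      (tphim (idxLK p n eK aL) p m j (tphi (idxML p n m eK aM) p k (Some x))).
Proof.
move=> m_gt0 jn km jkl l_le.
(* the pair (j', l - j') of Omega_l dominates (j, k) coordinatewise *)
have j'_lt : (maxn j (l - logn p m) < (logn p n).+1)%N by lia.
pose j' := Ordinal j'_lt.
apply: (@ole_trans (phim (idxLK p n eK aL) p m j'
                      (phi (idxML p n m eK aM) p (l - j') (Some x)))).
  by apply: big_omin_ole; rewrite ?mem_index_enum //=; lia.
by apply: phim_phi_ole => //=; lia.
Qed.

Definition succ_pair {N M : nat} (jk : 'I_N.+1 * 'I_M.+1) : 'I_N.+1 * 'I_M.+1 :=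
  if (jk.2 < M)%N then (jk.1, inord jk.2.+1) else (inord jk.1.+1, jk.2).

Section Tower.
Variables (p n m : nat) (eK : option nat) (aL aM : nat -> bool).
Hypotheses (hp : prime p) (hn : (1 < n)%N) (hm : (1 < m)%N).
Hypothesis heK : forall e, eK = Some e -> (0 < e)%N.
Hypothesis hsepL : eK = None -> exists h, aL h && ~~ (p %| h + n)%N.
Hypothesis hsepM : eK = None -> exists h, aM h && ~~ (p %| h + m)%N.
Variable l : nat.
Hypothesis hl : (l <= logn p n + logn p m)%N.

Local Notation nu := (logn p n).
Local Notation mu := (logn p m).
Local Notation iL := (idxLK p n eK aL).
Local Notation iM := (idxML p n m eK aM).
Local Notation lam0 := (lam p n m eK aL aM l 0).
Local Notation S a := (Sla p n m eK aL aM l a 0).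

Let dL j := odflt 0%N (iL j).
Let dM k := odflt 0%N (iM k).
Let tval j k : rat := (m * dL j)%:R + (p ^ j)%:R * (dM k)%:R.

Lemma tower_idx_finite N aN c j :
  (eK = None -> exists h, aN h && ~~ (p %| h + N)%N) ->
  exists d, ins_idx p N aN (omap (muln c) eK) j = Some d.
Proof.
move=> hsep; apply: ins_idx_finite; case eK_eq: eK => [e|]; first by left.
right; have [h /andP [ah p_ndvd]] := hsep eK_eq.
by exists h; rewrite ah logn_coprime // prime_coprime.
Qed.

Lemma idxLK_Some j : iL j = Some (dL j).
Proof. by rewrite /dL /idxLK /vLp; have [d ->] := tower_idx_finite n j hsepL. Qed.

Lemma idxML_Some k : iM k = Some (dM k).
Proof. by rewrite /dM /idxML /vMp; have [d ->] := tower_idx_finite (m * n) k hsepM. Qed.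

Lemma dL_succ_le j : (dL j.+1 <= dL j)%N.
Proof.
have := ins_idx_onle_succ p n aL (vLp n eK) j.
by rewrite -!/(idxLK _ _ _ _ _) !idxLK_Some.
Qed.

Lemma dM_succ_le k : (dM k.+1 <= dM k)%N.
Proof.
have := ins_idx_onle_succ p m aM (vMp n m eK) k.
by rewrite -!/(idxML _ _ _ _ _ _) !idxML_Some.
Qed.

Lemma dM_mu : dM mu = 0%N.
Proof. by rewrite /dM /idxML ins_idx_ge. Qed.

Lemma dM_pred_mu_gt0 : (0 < mu)%N -> (0 < dM mu.-1)%N.
Proof.
move=> mu_gt0; rewrite lt0n; apply/eqP => dM0.
have vMp_neq0 : vMp n m eK <> Some 0%N.
  rewrite /vMp; case eK_eq: eK => [e|] //= [] /eqP.
  rewrite !muln_eq0 => /orP [/orP [] | ] /eqP; [lia | lia |].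
  by have := heK eK_eq; lia.
apply: (ins_idx_pred_eta_neq0 (a := aM) vMp_neq0 mu_gt0).
by rewrite -/(idxML p n m eK aM _) idxML_Some dM0.
Qed.

Lemma tphim_tphi0E j k : tphim iL p m j (tphi iM p k (Some 0)) = Some (tval j k).
Proof. by rewrite /tphi idxML_Some /tphim idxLK_Some mulr0 addr0. Qed.

Lemma lam0_ole j k : (j <= nu)%N -> (k <= mu)%N -> (j + k <= l)%N ->
  ole lam0 (Some (tval j k)).
Proof. by move=> jn km jkl; rewrite -tphim_tphi0E; apply: lam_ole => //; lia. Qed.

Lemma mem_Sla0 a (jk : 'I_nu.+1 * 'I_mu.+1) :
  (jk \in S a) = ((jk.1 + jk.2 == a)%N && (Some (tval jk.1 jk.2) == lam0)).
Proof. by rewrite inE tphim_tphi0E. Qed.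

Lemma attains_succ_k j k : (j <= nu)%N -> (k < mu)%N -> (j + k < l)%N ->
  Some (tval j k) = lam0 -> Some (tval j k.+1) = lam0.
Proof.
move=> jn k_lt jkl att; apply: ole_anti; last by apply: lam0_ole; lia.
by rewrite -att /= lerD2l ler_wpM2l ?ler0n // ler_nat dM_succ_le.
Qed.

Lemma attains_succ_j j : (j + mu < l)%N ->
  Some (tval j mu) = lam0 -> Some (tval j.+1 mu) = lam0.
Proof.
move=> jml att; apply: ole_anti; last by apply: lam0_ole; lia.
by rewrite -att /tval dM_mu /= !mulr0 !addr0 ler_nat leq_mul2l dL_succ_le orbT.
Qed.

Lemma not_attains_pred_mu j : (0 < mu)%N -> (j + mu <= l)%N ->
  Some (tval j mu.-1) <> lam0.
Proof.
move=> mu_gt0 jml att.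
have jn : (j <= nu)%N by lia.
have := lam0_ole jn (leqnn mu) jml.
rewrite -att /tval dM_mu /= mulr0 lerD2l -natrM lern0 muln_eq0 expn_eq0.
by rewrite eqn0Ngt prime_gt0 // eqn0Ngt dM_pred_mu_gt0.
Qed.

Lemma succ_pair_mem a jk : (a < l)%N -> jk \in S a -> succ_pair jk \in S a.+1.
Proof.
case: jk => j k a_lt; rewrite !mem_Sla0 /succ_pair /= => /andP [/eqP jka /eqP att].
have j_le : (j <= nu)%N by rewrite -ltnS.
apply/andP; case: ltnP => [k_lt | k_ge] /=.
  rewrite inordK //; split; apply/eqP; first by rewrite addnS jka.
  by apply: attains_succ_k => //; rewrite jka.
have k_mu : nat_of_ord k = mu by apply/eqP; rewrite eqn_leq k_ge -ltnS ltn_ord.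
rewrite k_mu in jka att *.
have jmul : (j + mu < l)%N by rewrite jka.
rewrite inordK; last by rewrite ltnS; lia.
split; apply/eqP; [by rewrite addSn jka | exact: attains_succ_j].
Qed.

Lemma succ_pair_inj a : (a < l)%N -> {in S a &, injective succ_pair}.
Proof.
move=> a_lt [j k] [j' k']; rewrite !mem_Sla0 /succ_pair /=.
move=> /andP [/eqP jka /eqP att] /andP [/eqP jka' /eqP att'].
(* (i, mu - 1) and (i - 1, mu) have the same successor, but the first cannot
   attain the minimum *)
have no_collision (i c : nat) : c.+1 = mu -> (i + c = a)%N ->
    Some (tval i c) <> lam0.
  move=> c_mu ica; rewrite -[c]/(c.+1.-1) c_mu.
  by apply: not_attains_pred_mu; rewrite -c_mu // addnS ica.
have k_le := ltn_ord k; have k'_le := ltn_ord k'.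
have j_le := ltn_ord j; have j'_le := ltn_ord j'.
case: ltnP => k_lt; case: ltnP => k'_lt [].
- move=> -> /(congr1 val) /=; rewrite !inordK // => -[k_eq].
  by congr pair; apply: val_inj.
- move=> j_eq /(congr1 val) /=; rewrite inordK // => k_eq.
  by case: (no_collision j k) => //; lia.
- move=> /(congr1 val) /=; rewrite inordK; last by rewrite ltnS; lia.
  by move=> j_eq k_eq; case: (no_collision j' k') => //; lia.
- move=> /(congr1 val) /=; rewrite !inordK; try (rewrite ltnS; lia).
  by case=> j_eq ->; congr pair; apply: val_inj.
Qed.

Lemma card_Sla0_le_succ a : (a < l)%N -> (#|S a| <= #|S a.+1|)%N.
Proof.
move=> a_lt; rewrite -(card_in_imset (succ_pair_inj a_lt)).
apply/subset_leq_card/subsetP => _ /imsetP [jk jk_in ->].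
exact: succ_pair_mem.
Qed.

End Tower.

Theorem lemma3p5 (p n m : nat) (eK : option nat) (aL aM : nat -> bool)
  (hp : prime p) (hn : (1 < n)%N) (hm : (1 < m)%N)
  (heK : forall e, eK = Some e -> (0 < e)%N)
  (haL0 : aL 0%N) (haM0 : aM 0%N)
  (hsepL : eK = None -> exists h, aL h && ~~ (p %| h + n)%N)
  (hsepM : eK = None -> exists h, aM h && ~~ (p %| h + m)%N)
  (l : nat) (hl : (l <= logn p n + logn p m)%N)
  (h0 : exists l0, (l0 <= l)%N /\ #|Sla p n m eK aL aM l l0 0| = 1%N) :
  in_T p n m eK aL aM l 0.
Proof.
have [l0 [l0_le card_l0]] := h0.
have card_step := card_Sla0_le_succ hp hn hm heK hsepL hsepM hl.
have [l1 [l1_le card_l1 empty_below]] := first_positive_eq1 card_step l0_le card_l0.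
split => //; exists l1; split; first exact: leq_trans l1_le l0_le.
by split=> // a a_lt; apply/cards0_eq/empty_below.
Qed.
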